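(* Let $D_1,\dots,D_n$ be PvMDs, set $D:=D_1\cap\dots\cap D_n$, and assume $D$ is essential with respect to $\{D_1,\dots,D_n\}$. Then $D$ is a PvMD.
   Context: For an integral domain $R$ with quotient field $K$ and nonzero fractional ideal $I$: $(R:I)=\{x\in K:xI\subseteq R\}$, $I^v=(R:(R:I))$, $I^t=\bigcup\{J^v:J\subseteq I \text{ finitely generated}\}$; $I$ is a $t$-ideal if $I=(0)$ or $I=I^t$; a $t$-prime is a prime $t$-ideal (so $(0)$ is a $t$-prime); $t$-maximal ideals are $t$-ideals maximal among proper $t$-ideals. $R$ is a PvMD if $R_{\mathfrak m}$ is a valuation domain for all $t$-maximal $\mathfrak m$. The $D_i$ are subrings of a common field. $D=\bigcap_i D_i$ is said to be essential with respect to $\{D_i\}$ if the family $\{(D_i)_{\mathfrak q}:\mathfrak q\in t\text{-Spec}(D_i), i\}$ is an essential representation of $D$, i.e. each $(D_i)_{\mathfrak q}$ is a valuation domain equal to $D_{\mathfrak p}$ for some prime $\mathfrak p$ of $D$. *)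

(* All rings are subrings of a common field K; subsets of K
   are represented as predicates K -> Prop, and equality of subsets is
   extensional (forall x, A x <-> B x). *)
From HB Require Import structures.
From mathcomp Require Import all_boot all_algebra.
Set Implicit Arguments. Unset Strict Implicit. Unset Printing Implicit Defensive.
Import GRing.Theory.
Local Open Scope ring_scope.

Section Defs.
Variable K : fieldType.

Definition is_subring (R : K -> Prop) : Prop :=
  [/\ R 0, R 1, (forall x y, R x -> R y -> R (x - y))
    & (forall x y, R x -> R y -> R (x * y))].

Definition qfield (R : K -> Prop) (x : K) : Prop :=
  exists a b, [/\ R a, R b, b != 0 & x = a / b].

Definition is_ideal (R I : K -> Prop) : Prop :=
  [/\ (forall x, I x -> R x), I 0,
      (forall x y, I x -> I y -> I (x + y))
    & (forall r x, R r -> I x -> I (r * x))].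

Fixpoint span (R : K -> Prop) (s : seq K) (x : K) : Prop :=
  match s with
  | [::] => x = 0
  | a :: s' => exists r y, [/\ R r, span R s' y & x = r * a + y]
  end.

Definition colon (R I : K -> Prop) (x : K) : Prop :=
  qfield R x /\ forall y, I y -> R (x * y).

Definition vclos (R I : K -> Prop) : K -> Prop := colon R (colon R I).

Definition tclos (R I : K -> Prop) (x : K) : Prop :=
  exists s : seq K, [/\ (forall a, a \in s -> I a),
                        (exists2 a, a \in s & a != 0)
                      & vclos R (span R s) x].

Definition is_tideal (R I : K -> Prop) : Prop :=
  is_ideal R I /\
  ((forall x, I x -> x = 0) \/ (forall x, I x <-> tclos R I x)).

Definition proper (R I : K -> Prop) : Prop := exists2 x, R x & ~ I x.

Definition is_prime (R P : K -> Prop) : Prop :=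
  [/\ is_ideal R P, proper R P
    & forall x y, R x -> R y -> P (x * y) -> P x \/ P y].

Definition is_tprime (R P : K -> Prop) : Prop := is_prime R P /\ is_tideal R P.

Definition is_tmaximal (R M : K -> Prop) : Prop :=
  [/\ is_tideal R M, proper R M
    & forall N, is_tideal R N -> proper R N ->
        (forall x, M x -> N x) -> forall x, N x -> M x].

Definition localization (R P : K -> Prop) (x : K) : Prop :=
  exists a s, [/\ R a, R s, ~ P s & x = a / s].

Definition valuation_domain (V : K -> Prop) : Prop :=
  is_subring V /\ forall x, qfield V x -> x != 0 -> V x \/ V x^-1.

Definition PvMD (R : K -> Prop) : Prop :=
  is_subring R /\
  forall M, is_tmaximal R M -> valuation_domain (localization R M).

Definition bigcap (n : nat) (Ds : 'I_n -> K -> Prop) (x : K) : Prop :=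
  forall i, Ds i x.

Definition essential_wrt (n : nat) (Ds : 'I_n -> K -> Prop) : Prop :=
  forall i Q, is_tprime (Ds i) Q ->
    valuation_domain (localization (Ds i) Q) /\
    exists P, is_prime (bigcap Ds) P /\
      forall x, localization (Ds i) Q x <-> localization (bigcap Ds) P x.

End Defs.

(* Let M be a t-maximal ideal of D = D_1 cap ... cap D_n; M is prime.  If
   every extension M D_i had t-closure D_i, finitely many elements of M would
   witness this for all i at once, and since D is the intersection of the D_i
   they would put 1 into M^t = M.  Hence some M D_i lies in a prime t-ideal Q
   of D_i (Zorn), and by essentiality (D_i)_Q = D_P is a valuation domain for
   a prime P of D.  An element of M outside P would be a unit of D_P, hence
   of (D_i)_Q, although it lies in Q; so M is contained in P and D_M, an
   overring of D_P, is a valuation domain. *)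
From Pilot Require Import Defs.
From mathcomp Require Import all_boot all_algebra ring.
From mathcomp Require Import classical_sets.
From Stdlib Require Import Classical.
Set Implicit Arguments.
Unset Strict Implicit.
Unset Printing Implicit Defensive.

Import GRing.Theory.
Local Open Scope ring_scope.
Local Open Scope classical_set_scope.
Local Notation span := Defs.span.
Local Notation proper := Defs.proper.
Local Notation bigcap := Defs.bigcap.

Lemma seq_witnesses (T U : eqType) (Q : U -> Prop) (Rel : U -> T -> Prop)
    (s : seq T) :
  (forall a, a \in s -> exists2 u, Q u & Rel u a) ->
  exists2 us : seq U, (forall u, u \in us -> Q u) &
    forall a, a \in s -> exists2 u, u \in us & Rel u a.
Proof.
elim: s => [|a s IH] hs; first by exists [::].
have [us hus hsus] := IH (fun b hb => hs b (predU1r b a hb)).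
have [u hu hua] := hs a (mem_head a s).
exists (u :: us) => [v|b]; first by rewrite inE => /predU1P[->|/hus].
rewrite inE => /predU1P[->|/hsus[v hv hvb]].
  by exists u; rewrite ?mem_head.
by exists v; rewrite // inE hv orbT.
Qed.

Section Subring.
Variables (K : fieldType) (R : K -> Prop).
Hypothesis hR : is_subring R.
Implicit Types (I J N M P : set K) (s : seq K) (x y z : K).

Lemma subring0 : R 0. Proof. by case: hR. Qed.
Lemma subring1 : R 1. Proof. by case: hR. Qed.
Lemma subringB x y : R x -> R y -> R (x - y).
Proof. by case: hR => _ _ h _; apply: h. Qed.

Lemma subringM x y : R x -> R y -> R (x * y).
Proof. by case: hR => _ _ _ h; apply: h. Qed.

Lemma subringN x : R x -> R (- x).
Proof.
by move=> hx; rewrite -sub0r; apply: subringB => //; apply: subring0.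
Qed.

Lemma subringD x y : R x -> R y -> R (x + y).
Proof.
by move=> hx hy; rewrite -[y]opprK; apply: subringB => //; apply: subringN.
Qed.

Lemma qfield_subring x : R x -> qfield R x.
Proof.
by exists x, 1; rewrite divr1 oner_neq0; split => //; apply: subring1.
Qed.

Lemma qfield_mulr x a : qfield R x -> R a -> qfield R (x * a).
Proof.
case=> u [v [hu hv hv0 ->]] ha; exists (u * a), v; rewrite mulrAC.
by split => //; apply: subringM.
Qed.

Lemma span0 s : span R s 0.
Proof.
elim: s => [|a s IH] //=; exists 0, 0.
by rewrite mul0r addr0; split => //; apply: subring0.
Qed.

Lemma span_mem s a : a \in s -> span R s a.
Proof.
elim: s => [|b s IH] //=; rewrite inE => /predU1P[->|/IH ha].
  exists 1, 0; rewrite mul1r addr0.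
  by split; [apply: subring1 | apply: span0 |].
by exists 0, a; rewrite mul0r add0r; split => //; apply: subring0.
Qed.

Lemma span_cat s t x y : span R s x -> span R t y -> span R (s ++ t) (x + y).
Proof.
elim: s x => [|a s IH] x /=; first by move=> -> hy; rewrite add0r.
case=> r [w [hr hw ->]] hy; exists r, (w + y); rewrite addrA.
by split => //; apply: IH.
Qed.

Lemma span_mull s r x : R r -> span R s x -> span R s (r * x).
Proof.
move=> hr; elim: s x => [|a s IH] x /=; first by move=> ->; rewrite mulr0.
case=> r' [w [hr' hw ->]]; exists (r * r'), (r * w); rewrite mulrDr mulrA.
by split => //; [apply: subringM | apply: IH].
Qed.

Lemma mul_span s y z :
  (forall a, a \in s -> R (y * a)) -> span R s z -> R (y * z).
Proof.
elim: s z => [|a s IH] z /= hs.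
  by move=> ->; rewrite mulr0; apply: subring0.
case=> r [w [hr hw ->]]; rewrite mulrDr mulrCA; apply: subringD.
  by apply: subringM => //; apply: hs; rewrite mem_head.
by apply: IH hw => b hb; apply: hs; rewrite inE hb orbT.
Qed.

Lemma vclos_spanP s x : vclos R (span R s) x <->
  qfield R x /\
  forall y, qfield R y -> (forall a, a \in s -> R (y * a)) -> R (y * x).
Proof.
split=> -[hx hv]; split => // y.
  by move=> hy hys; rewrite mulrC; apply: hv; split => // z; apply: mul_span.
case=> hy hys; rewrite mulrC; apply: hv => // a ha.
by apply: hys; apply: span_mem.
Qed.

Lemma vclos_span1P s : vclos R (span R s) 1 <->
  forall y, qfield R y -> (forall a, a \in s -> R (y * a)) -> R y.
Proof.
rewrite vclos_spanP; split => [[_ h] y hy /(h y hy)|h]; first by rewrite mulr1.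
split => [|y hy /(h y hy)]; last by rewrite mulr1.
by apply: qfield_subring; apply: subring1.
Qed.

Lemma vclos_span1_mul s t : (forall a, a \in s -> R a) ->
  vclos R (span R s) 1 -> vclos R (span R t) 1 ->
  vclos R (span R [seq a * b | a <- s, b <- t]) 1.
Proof.
move=> sR /vclos_span1P hs /vclos_span1P ht; apply/vclos_span1P => y hy hyst.
apply: hs => // a ha; apply: ht => [|b hb].
  by apply: qfield_mulr => //; apply: sR.
by rewrite -mulrA; apply: hyst; apply/allpairsP; exists (a, b).
Qed.

Lemma ideal_sub N : is_ideal R N -> N `<=` R. Proof. by case. Qed.

Lemma ideal_neq0 N x : is_ideal R N -> ~ N x -> x != 0.
Proof. by case=> _ hN0 _ _ hNx; apply/eqP => hx; apply: hNx; rewrite hx. Qed.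

Lemma proper_ideal_not1 N : is_ideal R N -> proper R N -> ~ N 1.
Proof.
by case=> _ _ _ hmul [x hx hNx] hN1; apply: hNx; rewrite -[x]mulr1; apply: hmul.
Qed.

Lemma tclos_sub N : is_ideal R N -> tclos R N `<=` R.
Proof.
move=> hN x [s [hs _ /vclos_spanP [_ hv]]]; rewrite -[x]mul1r; apply: hv.
  by apply: qfield_subring; apply: subring1.
by move=> a /hs /(ideal_sub hN); rewrite mul1r.
Qed.

Lemma sub_tclos N : is_ideal R N -> (exists2 a, N a & a != 0) ->
  N `<=` tclos R N.
Proof.
move=> hN [a ha ha0] x hx; exists [:: x; a]; split.
- by move=> b; rewrite !inE => /orP[] /eqP ->.
- by exists a; rewrite // !inE eqxx orbT.
- apply/vclos_spanP; split; first exact/qfield_subring/(ideal_sub hN).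
  by move=> y _ hy; apply: hy; rewrite mem_head.
Qed.

Lemma tideal_tclos M : is_tideal R M -> (exists2 m, M m & m != 0) ->
  tclos R M `<=` M.
Proof.
move=> [_ [hM0|hM]] [m hm hm0] x; last by move/hM.
by move: hm0; rewrite (hM0 m hm) eqxx.
Qed.

Definition adjoin N x z := exists2 n, N n & exists2 r, R r & z = n + r * x.

Lemma adjoin_ideal N x : is_ideal R N -> R x -> is_ideal R (adjoin N x).
Proof.
move=> [hNR hN0 hadd hmul] hx; split.
- move=> _ [n /hNR hn [r hr ->]]; apply: subringD => //; exact: subringM.
- by exists 0 => //; exists 0; rewrite ?mul0r ?addr0 //; apply: subring0.
- move=> _ _ [n hn [r hr ->]] [n' hn' [r' hr' ->]].
  exists (n + n'); first exact: hadd.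
  by exists (r + r'); [apply: subringD | ring].
- move=> c _ hc [n hn [r hr ->]]; exists (c * n); first exact: hmul.
  by exists (c * r); [apply: subringM | ring].
Qed.

Lemma sub_adjoin N x : N `<=` adjoin N x.
Proof.
move=> n hn; exists n => //.
by exists 0; rewrite ?mul0r ?addr0 //; apply: subring0.
Qed.

Lemma adjoin_mem N x : is_ideal R N -> adjoin N x x.
Proof.
case=> _ hN0 _ _; exists 0 => //.
by exists 1; rewrite ?mul1r ?add0r //; apply: subring1.
Qed.

Lemma adjoin_mul N x y a b : is_ideal R N -> R x -> R y -> N (x * y) ->
  adjoin N x a -> adjoin N y b -> N (a * b).
Proof.
move=> [hNR _ hadd hmul] hx hy hxy [n1 hn1 [r1 hr1 ->]] [n2 hn2 [r2 hr2 ->]].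
have -> : (n1 + r1 * x) * (n2 + r2 * y) =
  (n2 + r2 * y) * n1 + (r1 * x) * n2 + (r1 * r2) * (x * y) by ring.
apply: (hadd); first apply: (hadd); apply: (hmul) => //; try exact: subringM.
by apply: subringD; [apply: hNR | apply: subringM].
Qed.

Lemma tclos_adjoin N x : is_ideal R N ->
  tclos R N x -> tclos R (adjoin N x) 1 -> tclos R N 1.
Proof.
move=> hN [s [hs [c hc hc0] hv]] [t [ht _ /vclos_span1P ht1]].
have [ns hns hdec] :=
  seq_witnesses (Rel := fun n e => exists2 r, R r & e = n + r * x) ht.
exists (ns ++ s); split.
- by move=> a; rewrite mem_cat => /orP[/hns|/hs].
- by exists c; rewrite // mem_cat hc orbT.
apply/vclos_span1P => y hy hys.
have hyx : R (y * x).
  case/vclos_spanP: hv => _; apply => // a ha.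
  by apply: hys; rewrite mem_cat ha orbT.
apply: ht1 => // e /hdec [n hn [r hr ->]].
rewrite mulrDr mulrCA; apply: subringD; first by apply: hys; rewrite mem_cat hn.
exact: subringM.
Qed.

Definition tproper N := is_ideal R N /\ ~ tclos R N 1.

Definition maximal_tproper N :=
  tproper N /\ forall N', tproper N' -> N `<=` N' -> N' `<=` N.

Lemma maximal_tproper_adjoin N x : maximal_tproper N -> R x -> ~ N x ->
  tclos R (adjoin N x) 1.
Proof.
move=> [[hN _] hmax] hx hNx; apply: NNPP => hx1; apply: hNx.
apply: (hmax (adjoin N x)); last exact: adjoin_mem.
  by split => //; apply: adjoin_ideal.
exact: sub_adjoin.
Qed.

Lemma maximal_tproper_prime N : maximal_tproper N -> is_prime R N.
Proof.
move=> hmax; have [[hN hN1] _] := hmax; split => //.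
  exists 1; first exact: subring1.
  move=> h1; apply: hN1; apply: sub_tclos => //.
  by exists 1; rewrite ?oner_neq0.
move=> x y hx hy hxy; apply: NNPP => /not_or_and [hNx hNy].
have [s [hs [a ha ha0] hs1]] := maximal_tproper_adjoin hmax hx hNx.
have [t [ht [b hb hb0] ht1]] := maximal_tproper_adjoin hmax hy hNy.
apply: hN1; exists [seq a * b | a <- s, b <- t]; split.
- move=> _ /allpairsP [[a' b'] [/hs ha' /ht hb' ->]].
  exact: adjoin_mul ha' hb'.
- by exists (a * b); [apply/allpairsP; exists (a, b) | apply: mulf_neq0].
- apply: vclos_span1_mul => // a' /hs; apply: ideal_sub; exact: adjoin_ideal.
Qed.

Lemma maximal_tproper_tideal N : maximal_tproper N -> is_tideal R N.
Proof.
move=> hmax; have [[hN hN1] _] := hmax; split => //.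
have [hnz|hz] := classic (exists2 a, N a & a != 0); last first.
  by left => x hx; apply: NNPP => /eqP hx0; apply: hz; exists x.
right => x; split; first exact: sub_tclos.
move=> hx; apply: NNPP => hNx; apply: hN1; apply: tclos_adjoin (hx) _ => //.
by apply: maximal_tproper_adjoin => //; apply: tclos_sub hN _ hx.
Qed.

Section ChainUnion.
Variables (I : set K) (F : set (set K)).
Hypotheses (hI : tproper I) (hF : forall X, F X -> tproper (I `|` X)).
Hypothesis hFtot : total_on F subset.

Lemma chain_seq_cover s :
  (forall a, a \in s -> (I `|` \bigcup_(X in F) X) a) ->
  exists2 X, X = set0 \/ F X & forall a, a \in s -> (I `|` X) a.
Proof.
elim: s => [|a s IH] hs; first by exists set0; [left|].
have [X hX hsX] := IH (fun b hb => hs b (predU1r b a hb)).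
have [Y hY haY] : exists2 Y, Y = set0 \/ F Y & (I `|` Y) a.
  case: (hs a (mem_head a s)) => [ha|[Y hY haY]].
    by exists set0; [left | left].
  by exists Y; [right | right].
have [Z hZ [hXZ hYZ]] : exists2 Z, Z = set0 \/ F Z & X `<=` Z /\ Y `<=` Z.
  case: hX => [->|hX]; first by exists Y => //; split; [apply: sub0set |].
  case: hY => [->|hY]; first by exists X; [right | split; [| apply: sub0set]].
  by case: (hFtot hX hY) => hXY; [exists Y | exists X]; by [right | split].
exists Z => // b; rewrite inE => /predU1P[->|/hsX]; first exact: setUS haY.
exact: setUS.
Qed.

Lemma tproper_chain_union : tproper (I `|` \bigcup_(X in F) X).
Proof.
set U := I `|` _.
have cover s : (forall a, a \in s -> U a) ->
    exists2 J, tproper J /\ J `<=` U & forall a, a \in s -> J a.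
  move=> /chain_seq_cover [X [->|hX] hsX].
    by exists I; [split => // x; left | move=> a /hsX [|[]]].
  exists (I `|` X) => //; split; first exact: hF.
  by apply: setUS => x hx; exists X.
have pair x y : U x -> U y ->
    exists2 J, tproper J /\ J `<=` U & J x /\ J y.
  move=> hx hy; have [|J hJ hxy] := cover [:: x; y].
    by move=> a; rewrite !inE => /orP[]/eqP->.
  by exists J => //; split; apply: hxy; rewrite !inE eqxx ?orbT.
split; first split.
- move=> x hx; have [J [[hJ _] _] [hJx _]] := pair x x hx hx.
  exact: ideal_sub hJ _ hJx.
- by left; case: hI => -[].
- move=> x y hx hy; have [J [[hJ _] hJU] [hJx hJy]] := pair x y hx hy.
  by apply: hJU; case: hJ => _ _ hadd _; apply: hadd.
- move=> r x hr hx; have [J [[hJ _] hJU] [hJx _]] := pair x x hx hx.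
  by apply: hJU; case: hJ => _ _ _ hmul; apply: hmul.
- move=> [s [hs hnz hv]]; have [J [[_ hJ1] _] hsJ] := cover s hs.
  by apply: hJ1; exists s.
Qed.

End ChainUnion.

(* Zorn is applied to the sets [X] with [I `|` X] t-proper, so that the
   union of the empty chain causes no trouble. *)
Lemma exists_maximal_tproper I : tproper I ->
  exists2 N, I `<=` N & maximal_tproper N.
Proof.
move=> hI; have [|A [hA hmax]] := @Zorn_bigcup K (fun X => tproper (I `|` X)).
  by move=> F hF hFtot; apply: tproper_chain_union.
exists (I `|` A) => //; split => // N' hN' hAN' x hx; apply: NNPP => hAx.
have hIN' : I `<=` N' by move=> y hy; apply: hAN'; left.
apply: (hmax N'); last by rewrite (setUidPr _ _).2.
split; first by move=> y hy; apply: hAN'; right.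
by move=> hN'A; apply: hAx; right; apply: hN'A.
Qed.

Lemma exists_tprime_over I : is_ideal R I -> ~ tclos R I 1 ->
  exists2 Q, is_tprime R Q & I `<=` Q.
Proof.
move=> hI hI1; have [Q hIQ hQ] := exists_maximal_tproper (conj hI hI1).
exists Q => //.
by split; [apply: maximal_tproper_prime | apply: maximal_tproper_tideal].
Qed.

Lemma tmaximal_prime M : is_tmaximal R M -> is_prime R M.
Proof.
move=> [hMt hMp hmax]; have hM := hMt.1.
have [hnz|hz] := classic (exists2 m, M m & m != 0); last first.
  split => // x y _ _ hxy; have : x * y == 0.
    by apply/eqP; apply: NNPP => /eqP hxy0; apply: hz; exists (x * y).
  by rewrite mulf_eq0 => /orP[]/eqP->; [left|right]; case: hM.
have hM1 : ~ tclos R M 1.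
  by move/(tideal_tclos hMt hnz); apply: proper_ideal_not1.
have [N hMN hN] := exists_maximal_tproper (conj hM hM1).
have hNp := maximal_tproper_prime hN.
have hNM : N `<=` M.
  by apply: hmax => //; [apply: maximal_tproper_tideal | case: hNp].
by have -> : M = N by apply/seteqP; split.
Qed.

Definition extend_ideal M x :=
  exists2 l, (forall a, a \in l -> M a) & span R l x.

Lemma sub_extend_ideal M : M `<=` extend_ideal M.
Proof.
move=> x hx; exists [:: x]; first by move=> a; rewrite inE => /eqP->.
by apply: span_mem; rewrite mem_head.
Qed.

Lemma extend_ideal_ideal M : M `<=` R -> is_ideal R (extend_ideal M).
Proof.
move=> hMR; split.
- move=> x [l hl hx]; rewrite -[x]mul1r; apply: mul_span hx => a /hl /hMR.
  by rewrite mul1r.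
- by exists [::].
- move=> x y [l hl hx] [l' hl' hy]; exists (l ++ l'); last exact: span_cat.
  by move=> a; rewrite mem_cat => /orP[/hl|/hl'].
- by move=> r x hr [l hl hx]; exists l => //; apply: span_mull.
Qed.

Lemma tclos1_extend_ideal M : tclos R (extend_ideal M) 1 ->
  exists2 F, (forall f, f \in F -> M f) & vclos R (span R F) 1.
Proof.
move=> [s [hs _ /vclos_span1P hv]].
have [ls hls hsls] := seq_witnesses (Rel := fun l a => span R l a) hs.
exists (flatten ls) => [f /flattenP [l /hls hl /hl] //|].
apply/vclos_span1P => y hy hyF; apply: hv => // a /hsls [l hl hla].
by apply: mul_span hla => f hf; apply: hyF; apply/flattenP; exists l.
Qed.

Lemma localization_mem P x : ~ P 1 -> R x -> localization R P x.
Proof.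
by move=> hP1 hx; exists x, 1; rewrite divr1; split => //; apply: subring1.
Qed.

Lemma localization_subring P : is_prime R P -> is_subring (localization R P).
Proof.
move=> [hPi hPp hPm]; have hP1 := proper_ideal_not1 hPi hPp.
have hS u v : R u -> R v -> ~ P u -> ~ P v -> ~ P (u * v).
  by move=> hu hv hPu hPv /(hPm _ _ hu hv) [].
split; [exact: localization_mem hP1 subring0 |
        exact: localization_mem hP1 subring1 | |].
- move=> _ _ [a [u [ha hu hPu ->]]] [b [v [hb hv hPv ->]]].
  exists (a * v - b * u), (u * v); split; try exact: hS; try exact: subringM.
  + by apply: subringB; apply: subringM.
  + by field; rewrite (ideal_neq0 hPi hPu) (ideal_neq0 hPi hPv).
- move=> _ _ [a [u [ha hu hPu ->]]] [b [v [hb hv hPv ->]]].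
  exists (a * b), (u * v); split; try exact: hS; try exact: subringM.
  by field; rewrite (ideal_neq0 hPi hPu) (ideal_neq0 hPi hPv).
Qed.

Lemma qfield_localization P x : is_prime R P ->
  qfield (localization R P) x <-> qfield R x.
Proof.
move=> [hPi hPp _]; have hP1 := proper_ideal_not1 hPi hPp; split.
  move=> [_ [_ [[a [u [ha hu hPu ->]]] [b [v [hb hv hPv ->]]] hv0 ->]]].
  have hb0 : b != 0 by apply: contraNneq hv0 => ->; rewrite mul0r.
  exists (a * v), (u * b); split; try exact: subringM.
    by rewrite mulf_neq0 // (ideal_neq0 hPi hPu).
  by field; rewrite hb0 (ideal_neq0 hPi hPu) (ideal_neq0 hPi hPv).
move=> [a [b [ha hb hb0 ->]]].
by exists a, b; split => //; apply: localization_mem.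
Qed.

Lemma localization_sub M P :
  M `<=` P -> localization R P `<=` localization R M.
Proof.
by move=> hMP _ [a [u [ha hu hPu ->]]]; exists a, u; split => // /hMP.
Qed.

Lemma valuation_localization P : is_prime R P ->
  (forall x, qfield R x -> x != 0 ->
     localization R P x \/ localization R P x^-1) ->
  valuation_domain (localization R P).
Proof.
move=> hP hval; split; first exact: localization_subring.
by move=> x /(qfield_localization _ hP) hx; apply: hval.
Qed.

End Subring.

Lemma localization_eq_sub (K : fieldType) (A B Q P M : set K) :
  is_subring B -> is_ideal A Q -> is_ideal B P ->
  (forall x, localization A Q x <-> localization B P x) ->
  M `<=` B -> M `<=` Q -> M `<=` P.
Proof.
move=> hB hQ hP hQP hMB hMQ m hm; apply: NNPP => hPm.
have hm0 := ideal_neq0 hP hPm.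
have /hQP [a [u [ha hu hQu hmV]]] : localization B P m^-1.
  by exists 1, m; rewrite mul1r; split => //; [apply: subring1 | apply: hMB].
have hu0 := ideal_neq0 hQ hQu.
have ha' : a = m^-1 * u by rewrite hmV divfK.
apply: hQu; have -> : u = a * m by rewrite ha' mulrAC mulVf ?mul1r.
by case: hQ => _ _ _; apply => //; apply: hMQ.
Qed.

Section Intersection.
Variables (K : fieldType) (n : nat) (Ds : 'I_n -> set K).
Hypothesis hDs : forall i, is_subring (Ds i).

Lemma bigcap_subring : is_subring (bigcap Ds).
Proof.
split => [i|i|x y hx hy i|x y hx hy i].
- exact: subring0.
- exact: subring1.
- exact: subringB.
- exact: subringM.
Qed.

Lemma qfield_bigcap i x : qfield (bigcap Ds) x -> qfield (Ds i) x.
Proof. by move=> [a [b [ha hb hb0 ->]]]; exists a, b. Qed.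

Lemma bigcap_tclos1 M : (exists2 m, M m & m != 0) ->
  (forall i, tclos (Ds i) (extend_ideal (Ds i) M) 1) -> tclos (bigcap Ds) M 1.
Proof.
move=> [m hm hm0] hall.
have [Fs hFs hiFs] := seq_witnesses (s := enum 'I_n)
  (Rel := fun F i => vclos (Ds i) (span (Ds i) F) 1)
  (fun i _ => tclos1_extend_ideal (hDs i) (hall i)).
exists (m :: flatten Fs); split.
- by move=> f; rewrite inE => /predU1P[->|/flattenP[F /hFs hF /hF]].
- by exists m; rewrite ?mem_head.
apply/(vclos_span1P bigcap_subring) => y hy hyF i.
have [F hF /(vclos_span1P (hDs i)) hv] := hiFs i (mem_enum _ i).
apply: hv => [|f hf]; first exact: qfield_bigcap.
by apply: hyF; rewrite inE; apply/orP; right; apply/flattenP; exists F.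
Qed.

Lemma tmaximal_extend_not_tclos1 M : is_tmaximal (bigcap Ds) M ->
  (exists2 m, M m & m != 0) ->
  exists i, ~ tclos (Ds i) (extend_ideal (Ds i) M) 1.
Proof.
move=> [hMt hMpr _] hnz; apply: NNPP => hall.
apply: (proper_ideal_not1 hMt.1 hMpr); apply: (tideal_tclos hMt hnz).
by apply: bigcap_tclos1 hnz _ => i; apply: NNPP => hi; apply: hall; exists i.
Qed.

End Intersection.

Theorem corollary2p15 (K : fieldType) (n : nat) (Ds : 'I_n -> K -> Prop)
  (hPvMD : forall i, PvMD (Ds i))
  (hess : essential_wrt Ds) :
  PvMD (bigcap Ds).
Proof.
have hDs i : is_subring (Ds i) by case: (hPvMD i).
have hD := bigcap_subring hDs.
split => // M hM; have hMp := tmaximal_prime hD hM; have [hMi _ _] := hMp.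
apply: valuation_localization => //.
have [hnz|hz] := classic (exists2 m, M m & m != 0); last first.
  move=> _ [a [b [ha hb hb0 ->]]] _; left; exists a, b; split => // hMb.
  by apply: hz; exists b.
have [i hi] := tmaximal_extend_not_tclos1 hDs hM hnz.
have hMDi : M `<=` Ds i by move=> x /(ideal_sub hMi); apply.
have [Q hQ hMQ] :=
  exists_tprime_over (hDs i) (extend_ideal_ideal (hDs i) hMDi) hi.
have [hval [P [[hPi _ _] hQP]]] := hess i Q hQ.
have [[hQi _ _] _] := hQ.
have hMP : M `<=` P.
  apply: (localization_eq_sub hD hQi hPi hQP (ideal_sub hMi)).
  by move=> x /(sub_extend_ideal (hDs i)) /hMQ.
move=> x hx hx0; have hxQ : qfield (localization (Ds i) Q) x.
  by apply/(qfield_localization (hDs i) _ hQ.1); apply: qfield_bigcap.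
by case: (hval.2 x hxQ hx0) => /hQP /(localization_sub hMP); [left | right].
Qed.
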